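(* For all $m,n \in \mathbb{N}_0$, all words $v \in \mathbb{W}_m$ and $w \in \mathbb{W}_{m+n}$, \[ \mathbb{P}\{U_{m+n}= w \mid U_m= v\} = \binom{w}{v} \frac{n!\,n!}{(2m+1)(2m+2)\cdots(2(m+n))}. \]
   Context: For $n \in \mathbb{N}_0$, $\mathbb{W}_n$ denotes the set of words over the alphabet $\{a,b\}$ with exactly $n$ letters $a$ and $n$ letters $b$, and $\mathbb{W} := \bigsqcup_{n} \mathbb{W}_n$. For words $w,v$, $\binom{w}{v}$ denotes the number of occurrences of $v$ as a (not necessarily contiguous) sub-word of $w$, i.e. the number of strictly increasing maps $g:\{1,\dots,|v|\}\to\{1,\dots,|w|\}$ with $w_{g(k)}=v_k$ for all $k$. The Markov chain $(U_n)_{n\in\mathbb{N}_0}$ on $\mathbb{W}$ starts at $U_0=\emptyset$ (the empty word); given $U_n \in \mathbb{W}_n$, first a letter $a$ is inserted uniformly at random into one of the $2n+1$ slots of $U_n$, then a letter $b$ is inserted uniformly at random into one of the $2n+2$ slots of the resulting word, giving $U_{n+1}$. Equivalently, for $v\in\mathbb{W}_m$, $w\in\mathbb{W}_{m+1}$, $\mathbb{P}\{U_{m+1}=w\mid U_m=v\}=\binom{w}{v}/((2m+2)(2m+1))$. *)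

(* Words over {a,b} are encoded as seq bool: true = a, false = b. *)
From mathcomp Require Import all_boot all_order all_algebra.
Set Implicit Arguments. Unset Strict Implicit. Unset Printing Implicit Defensive.
Import Order.TTheory GRing.Theory Num.Theory.
Local Open Scope ring_scope.

Definition word := seq bool.
Definition la : bool := true.
Definition lb : bool := false.

Definition inW (n : nat) (w : word) : bool :=
  (count (pred1 la) w == n) && (count (pred1 lb) w == n).

Fixpoint allwords (L : nat) : seq word :=
  if L is L'.+1 then [seq b :: s | b <- [:: true; false], s <- allwords L']
  else [:: [::]].

(* binom w v : number of strictly increasing position maps g with w_{g k} = v_k,
   i.e. number of selections (masks) of positions of w spelling v *)
Definition subword_count (w v : word) : nat :=
  count (fun m : bitseq => mask m w == v) (allwords (size w)).

Definition ins (x : bool) (i : nat) (s : word) : word := take i s ++ x :: drop i s.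

(* one-step transition probability: insert a uniformly into one of the size v + 1
   slots, then b uniformly into one of the size v + 2 slots *)
Definition step (v w : word) : rat :=
  (\sum_(i <- iota 0 (size v).+1) \sum_(j <- iota 0 (size v).+2)
     ((ins lb j (ins la i v) == w) : nat)%:R)
  / (((size v).+1)%:R * ((size v).+2)%:R).

(* n-step transition probability P{U_{k+n} = w | U_k = v} of the Markov chain *)
Fixpoint nstep (n : nat) (v w : word) : rat :=
  if n is n'.+1 then \sum_(u <- allwords (size v).+2) step v u * nstep n' u w
  else ((v == w) : nat)%:R.

(* law of U_k, with U_0 = empty word *)
Definition law (k : nat) (v : word) : rat := nstep k [::] v.

Definition joint (m n : nat) (v w : word) : rat := law m v * nstep n v w.

Definition condP (m n : nat) (v w : word) : rat := joint m n v w / law m v.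

(* Write C(w, v) for the number of occurrences of v as a subword of w.  Pairs
   (slot i, occurrence of v with x inserted at slot i) in w correspond to pairs
   (occurrence of v, unused position of an x in w), so summing C(w, .) over the
   |v| + 1 insertions of x into v gives (#x w - #x v) C(w, v).  One step of the
   chain inserts an a and then a b, so by induction on n
     (|v|+1)(|v|+2)...(|v|+2n) P(U_{m+n} = w | U_m = v)
       = C(w, v) (#a w - #a v)_n (#b w - #b v)_n      (falling factorials)
   whenever |w| = |v| + 2n, and both falling factorials are n! for
   v in W_m, w in W_{m+n}. *)

From mathcomp Require Import all_boot all_order all_algebra.
From mathcomp Require Import zify ring.
Import Order.TTheory GRing.Theory Num.Theory.

Set Implicit Arguments.
Unset Strict Implicit.
Unset Printing Implicit Defensive.

Local Open Scope nat_scope.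

Lemma big_iotaS (R : Type) (idx : R) (op : Monoid.law idx) n (F : nat -> R) :
  \big[op/idx]_(i <- iota 0 n.+1) F i = op (F 0) (\big[op/idx]_(i <- iota 0 n) F i.+1).
Proof.
have -> : iota 0 n.+1 = 0 :: map succn (iota 0 n).
  by congr (_ :: _); exact: (iotaDl 1 0 n).
by rewrite big_cons big_map.
Qed.

Section SubseqCount.
Variable T : eqType.
Implicit Types (x y z : T) (v w : seq T).

Fixpoint subseq_count w v : nat :=
  match w, v with
  | [::], _ => v == [::]
  | _ :: _, [::] => 1
  | z :: w', y :: v' => subseq_count w' v + (z == y) * subseq_count w' v'
  end.

Lemma subseq_count0 w : subseq_count w [::] = 1.
Proof. by case: w. Qed.

Lemma subseq_count_small w v : size w < size v -> subseq_count w v = 0.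
Proof. by elim: w v => [|z w IH] [|y v] //= ltwv; rewrite !IH //=; lia. Qed.

Lemma subseq_count_eq_size w v : size w = size v -> subseq_count w v = (w == v).
Proof.
elim: w v => [|z w IH] [|y v] //= [eq_wv].
rewrite subseq_count_small /= ?eq_wv // IH // eqseq_cons.
by case: (z == y); case: (w == v).
Qed.

Lemma count_mask_allwords w v :
  count (fun m : bitseq => mask m w == v) (allwords (size w)) = subseq_count w v.
Proof.
elim: w v => [|z w IH] v; first by case: v.
rewrite /= cats0 count_cat !count_map.
rewrite (eq_count (a1 := preim (cons true) _) (a2 := fun m => z :: mask m w == v)) //.
rewrite (eq_count (a1 := preim (cons false) _) (a2 := fun m => mask m w == v)) // IH.
case: v => [|y v] /=.
  by rewrite (eq_count (a2 := pred0)) ?count_pred0 // subseq_count0.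
rewrite addnC; congr (_ + _).
have [<-|neq_zy] /= := eqVneq z y.
  by rewrite mul1n -IH; apply: eq_count => m; rewrite /= eqseq_cons eqxx.
rewrite mul0n (eq_count (a2 := pred0)) ?count_pred0 // => m.
by rewrite /= eqseq_cons (negbTE neq_zy).
Qed.

Lemma subseq_count_cons z w y v :
  subseq_count (z :: w) (y :: v) = subseq_count w (y :: v) + (z == y) * subseq_count w v.
Proof. by []. Qed.

Lemma sum_insert_cons (F : seq T -> nat) x y v :
  \sum_(i <- iota 0 (size (y :: v)).+1) F (take i (y :: v) ++ x :: drop i (y :: v))
  = F [:: x, y & v] + \sum_(i <- iota 0 (size v).+1) F (y :: (take i v ++ x :: drop i v)).
Proof. by rewrite big_iotaS. Qed.

(* Both sides are kept free of subtraction so that the induction step is a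
   semiring identity. *)
Lemma sum_subseq_count_insertD x w v :
  \sum_(i <- iota 0 (size v).+1) subseq_count w (take i v ++ x :: drop i v)
    + count (pred1 x) v * subseq_count w v
  = count (pred1 x) w * subseq_count w v.
Proof.
elim: w v => [|z w IH] v.
  rewrite big1_seq => [|i _]; last by case: (take i v).
  by case: v => [|y v] /=; rewrite ?muln0.
case: v => [|y v].
  by have := IH [::]; rewrite /= !big_cons !big_nil !subseq_count0; lia.
rewrite sum_insert_cons; under eq_bigr do rewrite subseq_count_cons.
rewrite !subseq_count_cons big_split -big_distrr.
move: (IH (y :: v)) (IH v); rewrite sum_insert_cons /=.
have [<-|_] := eqVneq z y; last by lia.
by nia.
Qed.

Lemma sum_subseq_count_insert x w v :
  \sum_(i <- iota 0 (size v).+1) subseq_count w (take i v ++ x :: drop i v)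
  = (count (pred1 x) w - count (pred1 x) v) * subseq_count w v.
Proof. by have := sum_subseq_count_insertD x w v; rewrite mulnBl; lia. Qed.

End SubseqCount.

Lemma subword_countE w v : subword_count w v = subseq_count w v.
Proof. exact: count_mask_allwords. Qed.

Lemma size_ins x i v : size (ins x i v) = (size v).+1.
Proof. by rewrite /ins size_cat /= size_take size_drop; case: ltnP; lia. Qed.

Lemma count_ins (p : pred bool) x i v : count p (ins x i v) = count p v + p x.
Proof. by rewrite -{2}(cat_take_drop i v) /ins !count_cat /=; lia. Qed.

Lemma size_word (w : word) : size w = count (pred1 la) w + count (pred1 lb) w.
Proof. by rewrite -(count_predC (pred1 la)); congr (_ + _); apply: eq_count => [[]]. Qed.

Lemma sum_subseq_count_ins2 w v :
  \sum_(i <- iota 0 (size v).+1) \sum_(j <- iota 0 (size v).+2)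
     subseq_count w (ins lb j (ins la i v))
  = (count (pred1 la) w - count (pred1 la) v)
    * (count (pred1 lb) w - count (pred1 lb) v) * subseq_count w v.
Proof.
under eq_bigr => i _ do
  rewrite -(size_ins la i) sum_subseq_count_insert count_ins addn0.
by rewrite -big_distrr sum_subseq_count_insert /= mulnCA mulnA.
Qed.

Lemma mem_allwords L u : (u \in allwords L) = (size u == L).
Proof.
elim: L u => [|L IH] [|b u] //=; rewrite cats0 mem_cat.
  by apply/negP => /orP [] /mapP [].
rewrite eqSS -IH; apply/orP/idP => [[] /mapP [t t_in [_ ->]] //|u_in].
by case: b; [left|right]; exact: map_f.
Qed.

Lemma uniq_allwords L : uniq (allwords L).
Proof.
have cons_inj (b : bool) : injective (cons b) by move=> s t [].
elim: L => [|L IH] //=; rewrite cats0 cat_uniq !map_inj_uniq // IH andbT /=.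
by apply/hasPn => _ /mapP [s _ ->]; apply/negP => /mapP [t _ []].
Qed.

Definition nstep_num n (v w : word) : nat :=
  (size w == size v + n.*2) * subseq_count w v
  * (count (pred1 la) w - count (pred1 la) v) ^_ n
  * (count (pred1 lb) w - count (pred1 lb) v) ^_ n.

Definition nstep_den s n : nat := \prod_(s.+1 <= i < (s + n.*2).+1) i.

Lemma sum_nstep_num_ins2 n v w :
  \sum_(i <- iota 0 (size v).+1) \sum_(j <- iota 0 (size v).+2)
     nstep_num n (ins lb j (ins la i v)) w
  = nstep_num n.+1 v w.
Proof.
set c := ((size w == size v + n.+1.*2)
          * (count (pred1 la) w - count (pred1 la) v).-1 ^_ n
          * (count (pred1 lb) w - count (pred1 lb) v).-1 ^_ n)%N.
have num_ins2 i j : nstep_num n (ins lb j (ins la i v)) w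
                    = c * subseq_count w (ins lb j (ins la i v)).
  rewrite /nstep_num /c !size_ins !count_ins /= !addn0 !subnDA !subn1.
  by rewrite doubleS !addnS; ring.
under eq_bigr => i _ do under eq_bigr => j _ do rewrite num_ins2.
under eq_bigr do rewrite -big_distrr.
rewrite -big_distrr /=.
by rewrite sum_subseq_count_ins2 /nstep_num /c !ffactnS; ring.
Qed.

Lemma nstep_denS s n : nstep_den s n.+1 = s.+1 * s.+2 * nstep_den s.+2 n.
Proof.
rewrite /nstep_den doubleS !addnS.
by rewrite big_ltn 1?big_ltn ?mulnA //; lia.
Qed.

Lemma nstep_den_gt0 s n : 0 < nstep_den s n.
Proof.
rewrite /nstep_den big_seq_cond prodn_cond_gt0 // => i /andP [].
by rewrite mem_index_iota; lia.
Qed.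

Local Open Scope ring_scope.

Lemma sum_step (F : word -> rat) v :
  \sum_(u <- allwords (size v).+2) step v u * F u
  = (\sum_(i <- iota 0 (size v).+1) \sum_(j <- iota 0 (size v).+2)
       F (ins lb j (ins la i v)))
    / ((size v).+1%:R * (size v).+2%:R).
Proof.
rewrite /step; under eq_bigr do rewrite mulrAC.
rewrite -big_distrl; congr (_ / _).
under eq_bigr do rewrite big_distrl.
rewrite exchange_big; apply: eq_bigr => i _.
under eq_bigr do rewrite big_distrl.
rewrite exchange_big; apply: eq_bigr => j _.
rewrite (bigD1_seq (ins lb j (ins la i v))) ?uniq_allwords ?mem_allwords ?size_ins //.
rewrite /= eqxx mul1r big1 ?addr0 // => u; rewrite eq_sym => /negbTE ->.
by rewrite mul0r.
Qed.

Lemma nstepE n v w :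
  nstep n v w = (nstep_num n v w)%:R / (nstep_den (size v) n)%:R.
Proof.
elim: n v => [|n IH] v.
  rewrite /nstep_num /nstep_den double0 !addn0 big_geq // divr1 !ffactn0 !muln1.
  have [eq_size|neq_size] := eqVneq (size w) (size v).
    by rewrite mul1n subseq_count_eq_size // eq_sym.
  have v_neq_w : v != w by apply: contraNneq neq_size => ->.
  by rewrite /= (negbTE v_neq_w) mul0n.
rewrite -[nstep _ _ _]/(\sum_(u <- allwords (size v).+2) step v u * nstep n u w).
rewrite (eq_big_seq (fun u =>
    step v u * ((nstep_num n u w)%:R / (nstep_den (size v).+2 n)%:R))); last first.
  by move=> u; rewrite mem_allwords IH => /eqP ->.
rewrite sum_step; under eq_bigr do rewrite -big_distrl -natr_sum.
rewrite -big_distrl -natr_sum sum_nstep_num_ins2 nstep_denS.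
by rewrite [(_ * nstep_den _ _)%:R]natrM natrM !invfM /=; ring.
Qed.

Lemma nstep_inW m n v w : inW m v -> inW (m + n) w ->
  nstep n v w = (subseq_count w v * (n`! * n`!))%:R / (nstep_den (2 * m) n)%:R.
Proof.
move=> /andP [/eqP va /eqP vb] /andP [/eqP wa /eqP wb].
rewrite nstepE /nstep_num (size_word v) (size_word w) va vb wa wb addKn ffactnn.
have -> : (m + n + (m + n) == m + m + n.*2)%N by apply/eqP; lia.
by rewrite mul1n mulnA addnn mul2n.
Qed.

Theorem mainTheorem1 (m n : nat) (v w : word) :
  inW m v -> inW (m + n) w ->
  condP m n v w =
    (subword_count w v)%:R * ((n`! * n`!)%N)%:R
    / (\prod_(2 * m + 1 <= i < (2 * (m + n)).+1) i)%:R.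
Proof.
move=> vW wW.
have law_neq0 : law m v != 0.
  rewrite /law (@nstep_inW 0) ?add0n // subseq_count0 mul1n.
  by apply: mulf_neq0;
    rewrite ?invr_eq0 pnatr_eq0 -lt0n ?muln_gt0 ?fact_gt0 ?nstep_den_gt0.
rewrite /condP /joint mulrAC divff // mul1r (nstep_inW vW wW) subword_countE natrM.
by rewrite /nstep_den addn1 -mul2n mulnDr.
Qed.
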